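(* Let $(\mathcal{S},\widehat{\mathcal{S}},\sigma,\tau,\iota)$ be a duplicated category of sets. Then for every object $X$ of $\mathcal{S}$ the component $\iota_X:\sigma(X)\to\tau(X)$ is a monomorphism in $\widehat{\mathcal{S}}$.
   Context: A duplicated category of sets is a quintet $(\mathcal{S},\widehat{\mathcal{S}},\sigma,\tau,\iota)$ such that: (i) $\mathcal{S}$ and $\widehat{\mathcal{S}}$ are categories satisfying Lawvere's axioms of the Elementary Theory of the Category of Sets (ETCS), i.e. each is a well-pointed topos with a natural numbers object satisfying the axiom of choice; (ii) $\sigma:\mathcal{S}\to\widehat{\mathcal{S}}$ is a functor preserving all finite limits, the subobject classifier $2$, exponentials and natural numbers objects; (iii) $\tau:\mathcal{S}\to\widehat{\mathcal{S}}$ is a functor preserving all finite limits; (iv) $\iota:\sigma\to\tau$ is a natural transformation such that $\iota_X=\mathrm{id}_{\sigma(X)}=\mathrm{id}_{\tau(X)}$ for every finite object $X$ of $\mathcal{S}$. *)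

Set Implicit Arguments.
Unset Strict Implicit.

(** * Categories (equality of morphisms is Leibniz equality) *)
Record Category := {
  Ob :> Type;
  Hom : Ob -> Ob -> Type;
  idm : forall A, Hom A A;
  comp : forall A B C, Hom B C -> Hom A B -> Hom A C;
  comp_id_l : forall A B (f : Hom A B), comp (idm B) f = f;
  comp_id_r : forall A B (f : Hom A B), comp f (idm A) = f;
  comp_assoc : forall A B C D (h : Hom C D) (g : Hom B C) (f : Hom A B),
      comp h (comp g f) = comp (comp h g) f
}.
Arguments Hom {c} _ _.
Arguments idm {c} A.
Arguments comp {c A B C} _ _.

Notation "g ∘ f" := (comp g f) (at level 40, left associativity).

Section Elementary.
Variable C : Category.

Definition mono {A B : C} (m : Hom A B) : Prop :=
  forall Z (x y : Hom Z A), m ∘ x = m ∘ y -> x = y.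

Definition epi {A B : C} (e : Hom A B) : Prop :=
  forall Z (x y : Hom B Z), x ∘ e = y ∘ e -> x = y.

Definition is_iso {A B : C} (f : Hom A B) : Prop :=
  exists g : Hom B A, g ∘ f = idm A /\ f ∘ g = idm B.

Definition is_terminal (T : C) : Prop :=
  forall A : C, exists f : Hom A T, forall g : Hom A T, g = f.

Definition is_initial (I : C) : Prop :=
  forall A : C, exists f : Hom I A, forall g : Hom I A, g = f.

Definition is_product (A B P : C) (p1 : Hom P A) (p2 : Hom P B) : Prop :=
  forall Z (f : Hom Z A) (g : Hom Z B),
    exists! h : Hom Z P, p1 ∘ h = f /\ p2 ∘ h = g.

Definition is_equalizer (A B E : C) (f g : Hom A B) (e : Hom E A) : Prop :=
  f ∘ e = g ∘ e /\
  forall Z (h : Hom Z A), f ∘ h = g ∘ h -> exists! k : Hom Z E, e ∘ k = h.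

Definition is_pullback (P A B X : C) (p1 : Hom P A) (p2 : Hom P B)
    (f : Hom A X) (g : Hom B X) : Prop :=
  f ∘ p1 = g ∘ p2 /\
  forall Z (h : Hom Z A) (k : Hom Z B), f ∘ h = g ∘ k ->
    exists! u : Hom Z P, p1 ∘ u = h /\ p2 ∘ u = k.

Definition has_finite_limits : Prop :=
  (exists T : C, is_terminal T) /\
  (forall A B : C, exists P (p1 : Hom P A) (p2 : Hom P B), is_product p1 p2) /\
  (forall (A B : C) (f g : Hom A B), exists E (e : Hom E A), is_equalizer f g e).

(** [E] is the exponential [B^A], with [P] (projections [p1],[p2]) a product
    [E x A] and evaluation [ev : P -> B]. *)
Definition is_exponential (A B E P : C) (p1 : Hom P E) (p2 : Hom P A)
    (ev : Hom P B) : Prop :=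
  is_product p1 p2 /\
  forall Z Q (q1 : Hom Q Z) (q2 : Hom Q A), is_product q1 q2 ->
  forall f : Hom Q B,
    exists! g : Hom Z E,
      forall h : Hom Q P, p1 ∘ h = g ∘ q1 -> p2 ∘ h = q2 -> ev ∘ h = f.

Definition has_exponentials : Prop :=
  forall A B : C, exists E P (p1 : Hom P E) (p2 : Hom P A) (ev : Hom P B),
    is_exponential p1 p2 ev.

Definition is_subobject_classifier (One Omega : C) (tru : Hom One Omega) : Prop :=
  is_terminal One /\
  forall A X (m : Hom A X), mono m ->
    exists! chi : Hom X Omega, forall t : Hom A One, is_pullback m t chi tru.

Definition is_NNO (One N : C) (z : Hom One N) (s : Hom N N) : Prop :=
  is_terminal One /\
  forall A (a : Hom One A) (f : Hom A A),
    exists! u : Hom N A, u ∘ z = a /\ u ∘ s = f ∘ u.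

Definition is_topos : Prop :=
  has_finite_limits /\ has_exponentials /\
  exists One Omega (tru : Hom One Omega), is_subobject_classifier tru.

Definition well_pointed : Prop :=
  forall One : C, is_terminal One ->
    (forall (A B : C) (f g : Hom A B),
        (forall x : Hom One A, f ∘ x = g ∘ x) -> f = g) /\
    ~ is_initial One.

Definition has_NNO : Prop :=
  exists One N (z : Hom One N) (s : Hom N N), is_NNO z s.

Definition choice_axiom : Prop :=
  forall (A B : C) (e : Hom A B), epi e -> exists s : Hom B A, e ∘ s = idm B.

Definition ETCS : Prop :=
  is_topos /\ well_pointed /\ has_NNO /\ choice_axiom.

(** Finite object (Dedekind finiteness; equivalent to the usual notion in
    ETCS). *)
Definition finite_obj (X : C) : Prop :=
  forall m : Hom X X, mono m -> is_iso m.

End Elementary.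

Arguments mono {C A B} m.
Arguments epi {C A B} e.
Arguments is_iso {C A B} f.

Record Functor (C D : Category) := {
  Fob :> Ob C -> Ob D;
  Fhom : forall A B : C, Hom A B -> Hom (Fob A) (Fob B);
  Fhom_id : forall A : C, Fhom (idm A) = idm (Fob A);
  Fhom_comp : forall (A B E : C) (g : Hom B E) (f : Hom A B),
      Fhom (g ∘ f) = Fhom g ∘ Fhom f
}.
Arguments Fhom {C D} f {A B} _ : rename.

Record NatTrans (C D : Category) (F G : Functor C D) := {
  ncomp :> forall A : C, Hom (F A) (G A);
  naturality : forall (A B : C) (f : Hom A B),
      Fhom G f ∘ ncomp A = ncomp B ∘ Fhom F f
}.
Arguments ncomp {C D F G} n A : rename.

Section Preservation.
Variables (C D : Category) (F : Functor C D).

Definition preserves_terminal : Prop :=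
  forall T : C, is_terminal T -> is_terminal (F T).

Definition preserves_products : Prop :=
  forall (A B P : C) (p1 : Hom P A) (p2 : Hom P B),
    is_product p1 p2 -> is_product (Fhom F p1) (Fhom F p2).

Definition preserves_equalizers : Prop :=
  forall (A B E : C) (f g : Hom A B) (e : Hom E A),
    is_equalizer f g e -> is_equalizer (Fhom F f) (Fhom F g) (Fhom F e).

Definition preserves_finite_limits : Prop :=
  preserves_terminal /\ preserves_products /\ preserves_equalizers.

Definition preserves_subobject_classifier : Prop :=
  forall (One Omega : C) (tru : Hom One Omega),
    is_subobject_classifier tru -> is_subobject_classifier (Fhom F tru).

Definition preserves_exponentials : Prop :=
  forall (A B E P : C) (p1 : Hom P E) (p2 : Hom P A) (ev : Hom P B),
    is_exponential p1 p2 ev ->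
    is_exponential (Fhom F p1) (Fhom F p2) (Fhom F ev).

Definition preserves_NNO : Prop :=
  forall (One N : C) (z : Hom One N) (s : Hom N N),
    is_NNO z s -> is_NNO (Fhom F z) (Fhom F s).

End Preservation.

Definition duplicated_category_of_sets (S Sh : Category)
    (sigma tau : Functor S Sh) (iota : NatTrans sigma tau) : Prop :=
  ETCS S /\ ETCS Sh /\
  (preserves_finite_limits sigma /\ preserves_subobject_classifier sigma /\
   preserves_exponentials sigma /\ preserves_NNO sigma) /\
  preserves_finite_limits tau /\
  (forall X : S, finite_obj X ->
     exists e : sigma X = tau X,
       iota X = eq_rect (sigma X) (fun Y => Hom (sigma X) Y) (idm (sigma X)) (tau X) e).

(** The truth-value object [Ω] of a well-pointed topos has at most two points.
    So every monomorphism [Ω -> Ω] is an involution, [Ω] is finite, and [ι_Ω] is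
    the identity. For an arbitrary [X], let [χ : X × X -> Ω] classify the
    diagonal. Two maps [x, y : Z -> σ X] with [ι_X x = ι_X y] pair to
    [w : Z -> σ(X × X)] with [ι_{X×X} w = τ(Δ) ι_X x]. Since [ι_Ω] is mono,
    [σ χ] and [σ(true ∘ !)] agree on [w]. Hence [w] factors through [σ] of
    their equalizer, on which both projections agree, and so [x = y]. *)
From Stdlib Require Import Classical.

Lemma injective_involutive_two_points {T : Type} (t : T) (f : T -> T) :
  (forall p q, p <> t -> q <> t -> p = q) ->
  (forall x y, f x = f y -> x = y) ->
  forall x, f (f x) = x.
Proof.
  intros two_points f_inj x.
  destruct (classic (f (f x) = x)) as [fixed | moved]; [exact fixed | exfalso].
  assert (fx_moved : f x <> x) by (intros E; apply moved; rewrite !E; reflexivity).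
  assert (ffx_moved : f (f x) <> f x) by (intros E; exact (fx_moved (f_inj _ _ E))).
  destruct (classic (x = t)) as [-> | x_nt].
  - exact (ffx_moved (two_points _ _ (fun E => moved E) (fun E => fx_moved E))).
  - destruct (classic (f x = t)) as [fx_t | fx_nt].
    + apply moved, two_points; [intros E; apply ffx_moved; congruence | exact x_nt].
    + exact (fx_moved (two_points _ _ fx_nt x_nt)).
Qed.

Section Elementary.
Context {C : Category}.

Lemma terminal_hom_unique {T : C} :
  is_terminal T -> forall {A} (f g : Hom A T), f = g.
Proof.
  intros T_term A f g. destruct (T_term A) as [h h_unique].
  rewrite (h_unique f), (h_unique g). reflexivity.
Qed.

Lemma eq_rect_idm_mono {A B : C} (e : A = B) {f : Hom A B} :
  f = eq_rect A (fun Y => Hom A Y) (idm A) B e -> mono f.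
Proof.
  destruct e. simpl. intros -> Z x y E. rewrite !comp_id_l in E. exact E.
Qed.

Lemma equalizer_mono {A B E : C} {f g : Hom A B} {e : Hom E A} :
  is_equalizer f g e -> mono e.
Proof.
  intros [e_eq e_univ] Z x y exy.
  assert (ex_eq : f ∘ (e ∘ x) = g ∘ (e ∘ x)) by (rewrite !comp_assoc, e_eq; reflexivity).
  destruct (e_univ Z _ ex_eq) as [v [_ v_unique]].
  transitivity v; [symmetry|]; apply v_unique; [reflexivity | exact (eq_sym exy)].
Qed.

Lemma section_mono {A B : C} {d : Hom A B} (p : Hom B A) :
  p ∘ d = idm A -> mono d.
Proof.
  intros pd Z x y E. rewrite <- (comp_id_l x), <- (comp_id_l y), <- pd, <- !comp_assoc, E.
  reflexivity.
Qed.

Lemma product_hom_ext {A B P Z : C} {p1 : Hom P A} {p2 : Hom P B} {f g : Hom Z P} :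
  is_product p1 p2 -> p1 ∘ f = p1 ∘ g -> p2 ∘ f = p2 ∘ g -> f = g.
Proof.
  intros P_prod E1 E2. destruct (P_prod Z (p1 ∘ g) (p2 ∘ g)) as [h [_ h_unique]].
  transitivity h; [symmetry|]; apply h_unique; split; auto.
Qed.

Lemma pullback_diagonal_proj_eq {X P One Om E : C} {p1 p2 : Hom P X} {d : Hom X P}
    {tX : Hom X One} {chi : Hom P Om} {tru : Hom One Om} {e : Hom E P} {t : Hom E One} :
  p1 ∘ d = idm X -> p2 ∘ d = idm X -> is_pullback d tX chi tru ->
  chi ∘ e = tru ∘ t -> p1 ∘ e = p2 ∘ e.
Proof.
  intros d1 d2 [_ d_univ] e_true.
  destruct (d_univ E e t e_true) as [u [[<- _] _]].
  rewrite !comp_assoc, d1, d2. reflexivity.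
Qed.

Section WellPointedClassifier.
Context {One Om : C} {tru : Hom One Om}.
Hypothesis classifier : is_subobject_classifier tru.
Hypothesis separating : forall (A B : C) (f g : Hom A B),
  (forall x : Hom One A, f ∘ x = g ∘ x) -> f = g.
Hypothesis equalizers : forall (A B : C) (f g : Hom A B),
  exists E (e : Hom E A), is_equalizer f g e.

Let One_terminal : is_terminal One := proj1 classifier.

Lemma pointless_of_nontrue {Z : C} {h k : Hom Z One} {r : Hom One Om} :
  r <> tru -> r ∘ h = tru ∘ k -> Hom One Z -> False.
Proof.
  intros r_nt r_true z. apply r_nt.
  rewrite <- (comp_id_r r), <- (comp_id_r tru).
  rewrite (terminal_hom_unique One_terminal (idm One) (h ∘ z)) at 1.
  rewrite (terminal_hom_unique One_terminal (idm One) (k ∘ z)).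
  rewrite !comp_assoc, r_true. reflexivity.
Qed.

Lemma pointless_hom_ext {Z W : C} :
  (Hom One Z -> False) -> forall f g : Hom Z W, f = g.
Proof. intros pointless f g. apply separating. intros z. destruct (pointless z). Qed.

Lemma nontrue_classifies_equalizer {p r : Hom One Om} {E : C} {e : Hom E One}
    (t : Hom E One) :
  p <> tru -> r <> tru -> is_equalizer p tru e -> is_pullback e t r tru.
Proof.
  intros p_nt r_nt [e_eq e_univ]. split.
  - apply pointless_hom_ext. exact (pointless_of_nontrue p_nt e_eq).
  - intros Z h k r_true.
    assert (h_eq : p ∘ h = tru ∘ h)
      by exact (pointless_hom_ext (pointless_of_nontrue r_nt r_true) _ _).
    destruct (e_univ Z h h_eq) as [v [v_fac v_unique]].
    exists v. split.
    + split; [exact v_fac | apply (terminal_hom_unique One_terminal)].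
    + intros u [u_fac _]. exact (v_unique u u_fac).
Qed.

Lemma classifier_nontrue_points_eq (p q : Hom One Om) :
  p <> tru -> q <> tru -> p = q.
Proof.
  intros p_nt q_nt. destruct (equalizers _ _ p tru) as [E [e e_equalizer]].
  destruct (proj2 classifier E One e (equalizer_mono e_equalizer)) as [chi [_ chi_unique]].
  rewrite <- (chi_unique p (fun t => nontrue_classifies_equalizer t p_nt p_nt e_equalizer)).
  exact (chi_unique q (fun t => nontrue_classifies_equalizer t p_nt q_nt e_equalizer)).
Qed.

Lemma classifier_finite : finite_obj Om.
Proof.
  intros m m_mono. exists m.
  assert (m_involutive : m ∘ m = idm Om).
  { apply separating. intros x. rewrite comp_id_l, <- comp_assoc.
    exact (injective_involutive_two_points tru (fun x => m ∘ x)
             classifier_nontrue_points_eq (m_mono One) x). }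
  split; exact m_involutive.
Qed.

End WellPointedClassifier.
End Elementary.

Section IotaMono.
Context {S Sh : Category} {sigma tau : Functor S Sh} (iota : NatTrans sigma tau).
Hypothesis sigma_products : preserves_products sigma.
Hypothesis sigma_equalizers : preserves_equalizers sigma.
Hypothesis tau_products : preserves_products tau.

Lemma iota_diagonal {X P : S} {Z : Sh} {p1 p2 : Hom P X} {d : Hom X P}
    (w : Hom Z (sigma P)) :
  is_product p1 p2 -> p1 ∘ d = idm X -> p2 ∘ d = idm X ->
  iota X ∘ (Fhom sigma p1 ∘ w) = iota X ∘ (Fhom sigma p2 ∘ w) ->
  iota P ∘ w = Fhom tau d ∘ (iota X ∘ (Fhom sigma p1 ∘ w)).
Proof.
  intros P_prod d1 d2 iota_w.
  apply (product_hom_ext (tau_products _ _ _ _ _ P_prod));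
    rewrite !comp_assoc, ?naturality, <- ?Fhom_comp, ?d1, ?d2, ?Fhom_id, comp_id_l,
      <- comp_assoc; [reflexivity | rewrite <- comp_assoc; exact (eq_sym iota_w)].
Qed.

Lemma iota_mono_of_classifier {One Om : S} {tru : Hom One Om} :
  is_subobject_classifier tru ->
  (forall A B : S, exists P (p1 : Hom P A) (p2 : Hom P B), is_product p1 p2) ->
  (forall (A B : S) (f g : Hom A B), exists E (e : Hom E A), is_equalizer f g e) ->
  mono (iota Om) -> forall X : S, mono (iota X).
Proof.
  intros [One_terminal classify] products equalizers iota_Om_mono X Z x y iota_xy.
  destruct (products X X) as [P [p1 [p2 P_prod]]].
  destruct (P_prod X (idm X) (idm X)) as [d [[d1 d2] _]].
  destruct (One_terminal X) as [tX _]. destruct (One_terminal P) as [tP _].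
  destruct (classify X P d (section_mono p1 d1)) as [chi [chi_pullback _]].
  destruct (equalizers P Om chi (tru ∘ tP)) as [E [e [e_eq e_univ]]].
  destruct (sigma_products _ _ _ _ _ P_prod Z x y) as [w [[w1 w2] _]].
  assert (chi_d : chi ∘ d = (tru ∘ tP) ∘ d).
  { rewrite (proj1 (chi_pullback tX)), <- comp_assoc.
    f_equal. apply (terminal_hom_unique One_terminal). }
  assert (w_eq : Fhom sigma chi ∘ w = Fhom sigma (tru ∘ tP) ∘ w).
  { apply iota_Om_mono. rewrite !comp_assoc, <- !naturality, <- !comp_assoc.
    rewrite (iota_diagonal w P_prod d1 d2) by (rewrite w1, w2; exact iota_xy).
    rewrite !comp_assoc, <- !Fhom_comp, chi_d. reflexivity. }
  destruct (proj2 (sigma_equalizers _ _ _ _ _ _ (conj e_eq e_univ)) Z w w_eq) as [v [<- _]].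
  rewrite <- w1, <- w2, !comp_assoc, <- !Fhom_comp.
  assert (e_true : chi ∘ e = tru ∘ (tP ∘ e)) by (rewrite comp_assoc; exact e_eq).
  rewrite (pullback_diagonal_proj_eq d1 d2 (chi_pullback tX) e_true). reflexivity.
Qed.

End IotaMono.

Theorem mainTheorem3 (S Sh : Category) (sigma tau : Functor S Sh)
    (iota : NatTrans sigma tau) :
  duplicated_category_of_sets iota ->
  forall X : S, mono (iota X).
Proof.
  intros [[[[_ [products equalizers]] [_ [One [Om [tru classifier]]]]] [well_pointed _]]
          [_ [[[_ [sigma_products sigma_equalizers]] _] [[_ [tau_products _]] iota_finite]]]].
  destruct (well_pointed One (proj1 classifier)) as [separating _].
  destruct (iota_finite Om (classifier_finite classifier separating equalizers))
    as [e iota_Om].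
  exact (iota_mono_of_classifier iota sigma_products sigma_equalizers tau_products
           classifier products equalizers (eq_rect_idm_mono e iota_Om)).
Qed.
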